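(* Let $\mathcal A$ be a transitive Lie algebroid over $M$ with kernel $\mathcal L$. For every triple $(g,h,\nabla)$ where $g$ is a (possibly degenerate) metric on $M$, $h$ is a non-degenerate inner metric on $\mathcal L$ and $\nabla$ is an ordinary connection on $\mathcal A$ with connection 1-form $\omega$, the formula $$\widehat g(X,Y)=g(\rho(X),\rho(Y))+h(\omega(X),\omega(Y)),\qquad X,Y\in\mathcal A,$$ defines an inner non-degenerate metric on $\mathcal A$; and every inner non-degenerate metric $\widehat g$ on $\mathcal A$ arises in this way from exactly one such triple (so that inner non-degenerate metrics on $\mathcal A$ are equivalent to such triples).
   Context: A transitive Lie algebroid over $M$ is a finitely generated projective $C^\infty(M)$-module $\mathcal A$ with Lie bracket and surjective $C^\infty(M)$-linear Lie morphism $\rho:\mathcal A\to\Gamma(TM)$ with $[X,fY]=f[X,Y]+(\rho(X)f)Y$; its kernel $\mathcal L=\ker\rho=\Gamma(\mathbb L)$ for a locally trivial Lie algebra bundle $\mathbb L$; $\iota:\mathcal L\to\mathcal A$ is the inclusion. An inner metric on $\mathcal L$ is a metric $h$ on the vector bundle $\mathbb L$ (a symmetric $C^\infty(M)$-bilinear map $\mathcal L\otimes\mathcal L\to C^\infty(M)$). A metric on $\mathcal A$ is a symmetric $C^\infty(M)$-bilinear map $\widehat g:\mathcal A\otimes\mathcal A\to C^\infty(M)$; it is inner non-degenerate if $\iota^*\widehat g$, $(\gamma,\eta)\mapsto\widehat g(\iota\gamma,\iota\eta)$, is non-degenerate on $\mathbb L$. An ordinary connection is a $C^\infty(M)$-linear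 $\nabla:\Gamma(TM)\to\mathcal A$ with $\rho\circ\nabla=\mathrm{id}$; its connection 1-form $\omega:\mathcal A\to\mathcal L$ is defined by $X=\nabla_{\rho(X)}-\iota(\omega(X))$. *)

From HB Require Import structures.
From mathcomp Require Import all_boot all_algebra.
Set Implicit Arguments. Unset Strict Implicit. Unset Printing Implicit Defensive.
Import GRing.Theory.
Local Open Scope ring_scope.

Section Defs.
Variable R : comNzRingType.

Definition Rlinear (U V : lmodType R) (f : U -> V) : Prop :=
  forall a x y, f (a *: x + y) = a *: f x + f y.

Definition Rform (V : lmodType R) (f : V -> R) : Prop :=
  forall a x y, f (a *: x + y) = a * f x + f y.

Definition is_metric (V : lmodType R) (b : V -> V -> R) : Prop :=
  (forall x, Rform (b x)) /\ (forall x y, b x y = b y x).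

(* non-degenerate: the musical map V -> Hom_R(V,R), x |-> b x, is bijective
   (for f.g. projective modules over C^oo(M) this is fiberwise non-degeneracy) *)
Definition nondeg_form (V : lmodType R) (b : V -> V -> R) : Prop :=
  (forall x, (forall y, b x y = 0) -> x = 0) /\
  (forall phi : V -> R, Rform phi -> exists x, forall y, b x y = phi y).

Definition fg_projective (V : lmodType R) : Prop :=
  exists n (p : V -> 'rV[R]_n) (s : 'rV[R]_n -> V),
    [/\ Rlinear p, Rlinear s & cancel p s].

Definition derivation (d : R -> R) : Prop :=
  (forall f g, d (f + g) = d f + d g) /\ (forall f g, d (f * g) = d f * g + f * d g).

(* Gamma(TM): module of vector fields acting faithfully on R by derivations,
   with the commutator bracket *)
Definition vector_fields (TM : lmodType R) (act : TM -> R -> R)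
    (brT : TM -> TM -> TM) : Prop :=
  [/\ forall X, derivation (act X),
      forall a X Y f, act (a *: X + Y) f = a * act X f + act Y f,
      forall X Y, (forall f, act X f = act Y f) -> X = Y &
      forall X Y f, act (brT X Y) f = act X (act Y f) - act Y (act X f)].

Definition transitive_Lie_algebroid (TM : lmodType R) (act : TM -> R -> R)
    (brT : TM -> TM -> TM) (A : lmodType R) (brA : A -> A -> A)
    (rho : A -> TM) : Prop :=
  [/\ fg_projective A,
      (forall x y z, brA (x + y) z = brA x z + brA y z)
      /\ (forall x, brA x x = 0)
      /\ (forall x y z, brA x (brA y z) + brA y (brA z x) + brA z (brA x y) = 0),
      Rlinear rho /\ (forall X, exists x, rho x = X),
      forall x y, rho (brA x y) = brT (rho x) (rho y) &
      forall x f y, brA x (f *: y) = f *: brA x y + act (rho x) f *: y].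

Definition kernel_inclusion (TM A L : lmodType R) (rho : A -> TM)
    (iota : L -> A) : Prop :=
  [/\ Rlinear iota, injective iota &
      forall x, rho x = 0 <-> exists l, iota l = x].

Definition ordinary_connection (TM A : lmodType R) (rho : A -> TM)
    (nabla : TM -> A) : Prop :=
  Rlinear nabla /\ forall X, rho (nabla X) = X.

Definition connection_form (TM A L : lmodType R) (rho : A -> TM)
    (iota : L -> A) (nabla : TM -> A) (omega : A -> L) : Prop :=
  forall x, x = nabla (rho x) - iota (omega x).

Definition inner_part (A L : lmodType R) (iota : L -> A) (ghat : A -> A -> R) :
  L -> L -> R := fun l m => ghat (iota l) (iota m).

Definition inner_nondegenerate (A L : lmodType R) (iota : L -> A)
    (ghat : A -> A -> R) : Prop :=
  nondeg_form (inner_part iota ghat).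

Definition induced_metric (TM A L : lmodType R) (rho : A -> TM)
    (g : TM -> TM -> R) (h : L -> L -> R) (omega : A -> L) : A -> A -> R :=
  fun x y => g (rho x) (rho y) + h (omega x) (omega y).

End Defs.

From HB Require Import structures.
From mathcomp Require Import all_boot all_algebra.
From Stdlib Require Import FunctionalExtensionality ClassicalEpsilon.
Local Open Scope ring_scope.
Import GRing.Theory.
Set Implicit Arguments. Unset Strict Implicit.

(* Inner non-degeneracy makes A the direct sum of L and its ghat-orthogonal
   complement, so every vector field X has a unique lift orthogonal to L;
   these lifts form the ordinary connection attached to ghat, and ghat splits
   as its restriction to the horizontal part plus its restriction to L.
   Conversely, for the metric built from (g, h, nabla) the lifts nabla X are
   orthogonal to L and the restriction to L is h, which forces uniqueness. *)

Section Bilinear.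
Variable R : comNzRingType.
Implicit Types U V : lmodType R.

Lemma Rlinear_add U V (f : U -> V) : Rlinear f -> {morph f : x y / x + y}.
Proof. by move=> Hf x y; have := Hf 1 x y; rewrite !scale1r. Qed.

Lemma Rlinear_sub U V (f : U -> V) : Rlinear f -> {morph f : x y / x - y}.
Proof. by move=> Hf x y; apply: (addIr (f y)); rewrite -Rlinear_add // !subrK. Qed.

Lemma Rlinear0 U V (f : U -> V) : Rlinear f -> f 0 = 0.
Proof. by move=> Hf; rewrite -(subrr 0) Rlinear_sub // subrr. Qed.

Lemma metric_linearl V (b : V -> V -> R) : is_metric b -> forall y, Rform (b^~ y).
Proof. by move=> [Hb Hs] y a x z; rewrite !(Hs _ y) Hb. Qed.

Section MetricArith.
Variables (V : lmodType R) (b : V -> V -> R).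
Hypothesis b_metric : is_metric b.

(* a linear form on V is an R-linear map into the regular module R^o *)
Let linl y : @Rlinear R V R^o (b^~ y) := metric_linearl b_metric y.
Let linr x : @Rlinear R V R^o (b x) := b_metric.1 x.

Lemma metric0l y : b 0 y = 0.
Proof. exact: Rlinear0 (linl y). Qed.

Lemma metric0r x : b x 0 = 0.
Proof. exact: Rlinear0 (linr x). Qed.

Lemma metricBl x y z : b (x - y) z = b x z - b y z.
Proof. exact: (Rlinear_sub (linl z) x y). Qed.

Lemma metricBr x y z : b x (y - z) = b x y - b x z.
Proof. exact: (Rlinear_sub (linr x) y z). Qed.

Lemma metricNl x y : b (- x) y = - b x y.
Proof. by rewrite -sub0r metricBl metric0l sub0r. Qed.

End MetricArith.

Definition pullback_form U V (f : U -> V) (b : V -> V -> R) : U -> U -> R :=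
  fun u v => b (f u) (f v).

Lemma pullback_metric U V (f : U -> V) (b : V -> V -> R) :
  Rlinear f -> is_metric b -> is_metric (pullback_form f b).
Proof.
move=> Hf [Hb Hs]; split=> [u a v w|u v]; last exact: Hs.
by rewrite /pullback_form Hf Hb.
Qed.

End Bilinear.

Section LieAlgebroidMetrics.
Variables (R : comNzRingType) (TM A L : lmodType R).
Variables (rho : A -> TM) (iota : L -> A).
Hypotheses (rho_linear : Rlinear rho) (iota_linear : Rlinear iota)
  (iota_inj : injective iota) (ker_rho : forall x, rho x = 0 <-> exists l, iota l = x).

Lemma rho_iota l : rho (iota l) = 0.
Proof. by apply/ker_rho; exists l. Qed.

Definition horizontal (ghat : A -> A -> R) (nabla : TM -> A) : Prop :=
  forall X l, ghat (nabla X) (iota l) = 0.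

Section ConnectionForm.
Variables (nabla : TM -> A) (omega : A -> L).
Hypotheses (nabla_conn : ordinary_connection rho nabla)
  (omega_form : connection_form rho iota nabla omega).

Lemma iota_connection_form x : iota (omega x) = nabla (rho x) - x.
Proof. by rewrite {3}(omega_form x) opprB addrC subrK. Qed.

Lemma connection_form_linear : Rlinear omega.
Proof.
case: nabla_conn => nabla_linear _ a x y; apply: iota_inj.
by rewrite iota_linear !iota_connection_form rho_linear nabla_linear scalerBr
  opprD addrACA.
Qed.

Lemma connection_form_iota l : omega (iota l) = - l.
Proof.
case: nabla_conn => nabla_linear _; apply: iota_inj.
by rewrite iota_connection_form rho_iota (Rlinear0 nabla_linear) -[- l]sub0r
  Rlinear_sub // Rlinear0.
Qed.

Lemma connection_form_nabla X : omega (nabla X) = 0.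
Proof.
case: nabla_conn => _ rho_nabla; apply: iota_inj.
by rewrite iota_connection_form rho_nabla subrr Rlinear0.
Qed.

Variables (g : TM -> TM -> R) (h : L -> L -> R).
Hypotheses (g_metric : is_metric g) (h_metric : is_metric h).
Let ghat := induced_metric rho g h omega.

Lemma induced_metric_is_metric : is_metric ghat.
Proof.
case: g_metric h_metric => [Hg g_sym] [Hh h_sym].
split=> [x a y z|x y]; last by rewrite /ghat /induced_metric g_sym h_sym.
rewrite /ghat /induced_metric rho_linear connection_form_linear Hg Hh.
by rewrite mulrDr addrACA.
Qed.

Lemma inner_part_induced_metric : inner_part iota ghat = h.
Proof.
apply: functional_extensionality => l; apply: functional_extensionality => m.
have h_sym := h_metric.2.
rewrite /inner_part /ghat /induced_metric !rho_iota !connection_form_iota.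
by rewrite metric0r // add0r !metricNl // h_sym metricNl // opprK h_sym.
Qed.

Lemma nabla_horizontal_induced : horizontal ghat nabla.
Proof.
move=> X l; rewrite /ghat /induced_metric rho_iota connection_form_nabla.
by rewrite metric0r // metric0l // addr0.
Qed.

Lemma pullback_induced_metric : pullback_form nabla ghat = g.
Proof.
apply: functional_extensionality => X; apply: functional_extensionality => Y.
rewrite /pullback_form /ghat /induced_metric !nabla_conn.2 !connection_form_nabla.
by rewrite metric0r // addr0.
Qed.

End ConnectionForm.

Lemma connection_form_exists nabla :
  ordinary_connection rho nabla -> exists omega, connection_form rho iota nabla omega.
Proof.
move=> [_ rho_nabla].
have [omega Homega] : exists omega : A -> L, forall x, iota (omega x) = nabla (rho x) - x.
  apply: (choice (fun x l => iota l = nabla (rho x) - x)) => x.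
  by apply/ker_rho; rewrite Rlinear_sub // rho_nabla subrr.
by exists omega => x; rewrite Homega opprB addrC subrK.
Qed.

Section HorizontalLift.
Variable ghat : A -> A -> R.
Hypotheses (ghat_metric : is_metric ghat)
  (ghat_inner : inner_nondegenerate iota ghat).

Lemma horizontal_lift_unique x y : rho x = rho y ->
  (forall l, ghat x (iota l) = 0) -> (forall l, ghat y (iota l) = 0) -> x = y.
Proof.
move=> rho_xy Hx Hy.
have [k Hk] : exists k, iota k = x - y.
  by apply/ker_rho; rewrite Rlinear_sub // rho_xy subrr.
have k0 : k = 0.
  apply: ghat_inner.1 => m.
  by rewrite /inner_part Hk metricBl // Hx Hy subrr.
by apply/eqP; rewrite -subr_eq0 -Hk k0 Rlinear0.
Qed.

Lemma horizontal_lift_exists X : (exists x, rho x = X) ->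
  exists x, rho x = X /\ forall l, ghat x (iota l) = 0.
Proof.
move=> [x rho_x]; have [Hghat _] := ghat_metric.
have [l0 Hl0] : exists l0, forall m, inner_part iota ghat l0 m = ghat x (iota m).
  by apply: ghat_inner.2 => a m k; rewrite iota_linear Hghat.
exists (x - iota l0); split; first by rewrite Rlinear_sub // rho_iota subr0.
by move=> l; rewrite metricBl // -Hl0 subrr.
Qed.

Lemma horizontal_connection_unique nabla1 nabla2 :
  ordinary_connection rho nabla1 -> ordinary_connection rho nabla2 ->
  horizontal ghat nabla1 -> horizontal ghat nabla2 -> nabla1 = nabla2.
Proof.
move=> [_ rho1] [_ rho2] hor1 hor2; apply: functional_extensionality => X.
by apply: horizontal_lift_unique; rewrite ?rho1 ?rho2.
Qed.

Lemma horizontal_connection_exists : (forall X, exists x, rho x = X) ->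
  exists nabla, ordinary_connection rho nabla /\ horizontal ghat nabla.
Proof.
move=> rho_onto.
have [nabla Hnabla] := choice _ (fun X => horizontal_lift_exists (rho_onto X)).
have rho_nabla X : rho (nabla X) = X by case: (Hnabla X).
have hor : horizontal ghat nabla by move=> X; case: (Hnabla X).
exists nabla; split=> //; split=> // a X Y.
apply: horizontal_lift_unique => [|l|l].
- by rewrite rho_linear !rho_nabla.
- exact: hor.
- by rewrite (metric_linearl ghat_metric _) !hor mulr0 addr0.
Qed.

Lemma metric_decomposition nabla omega : horizontal ghat nabla ->
  connection_form rho iota nabla omega ->
  ghat = induced_metric rho (pullback_form nabla ghat) (inner_part iota ghat) omega.
Proof.
move=> hor omega_form.
apply: functional_extensionality => x; apply: functional_extensionality => y.
rewrite {1}(omega_form x) {1}(omega_form y) /induced_metric /pullback_form /inner_part.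
rewrite metricBr // !metricBl // [ghat (iota _) _]ghat_metric.2 !hor.
by rewrite subr0 sub0r opprK.
Qed.

End HorizontalLift.
End LieAlgebroidMetrics.

Theorem proposition2p7 (R : comNzRingType) (TM : lmodType R)
    (act : TM -> R -> R) (brT : TM -> TM -> TM)
    (A : lmodType R) (brA : A -> A -> A) (rho : A -> TM)
    (L : lmodType R) (iota : L -> A) :
  vector_fields act brT ->
  transitive_Lie_algebroid act brT brA rho ->
  kernel_inclusion rho iota ->
  (forall (g : TM -> TM -> R) (h : L -> L -> R) (nabla : TM -> A) (omega : A -> L),
      is_metric g -> is_metric h -> nondeg_form h ->
      ordinary_connection rho nabla -> connection_form rho iota nabla omega ->
      is_metric (induced_metric rho g h omega) /\
      inner_nondegenerate iota (induced_metric rho g h omega)) /\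
  (forall ghat : A -> A -> R,
      is_metric ghat -> inner_nondegenerate iota ghat ->
      exists! t : (TM -> TM -> R) * (L -> L -> R) * (TM -> A),
        let: (g, h, nabla) := t in
        [/\ is_metric g, is_metric h, nondeg_form h,
            ordinary_connection rho nabla &
            exists omega : A -> L, connection_form rho iota nabla omega /\
              ghat = induced_metric rho g h omega]).
Proof.
move=> _ [_ _ [rho_linear rho_onto] _ _] [iota_linear iota_inj ker_rho]; split.
  move=> g h nabla omega g_metric h_metric h_nondeg nabla_conn omega_form.
  split; first exact: (induced_metric_is_metric rho_linear iota_linear iota_inj
    nabla_conn omega_form g_metric h_metric).
  by rewrite /inner_nondegenerate (inner_part_induced_metric iota_linear iota_inj
    ker_rho nabla_conn omega_form g_metric h_metric).
move=> ghat ghat_metric ghat_inner.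
have [nabla [nabla_conn nabla_hor]] := horizontal_connection_exists rho_linear
  iota_linear ker_rho ghat_metric ghat_inner rho_onto.
have [omega omega_form] := connection_form_exists rho_linear ker_rho nabla_conn.
exists (pullback_form nabla ghat, inner_part iota ghat, nabla); split.
  split=> //.
  - exact: (pullback_metric nabla_conn.1 ghat_metric).
  - exact: (pullback_metric iota_linear ghat_metric).
  - by exists omega; split; last exact: metric_decomposition.
move=> [[g h] nabla'] [g_metric h_metric _ nabla'_conn [omega' [omega'_form ghat_eq]]].
have -> : nabla = nabla'.
  apply: (horizontal_connection_unique rho_linear iota_linear ker_rho ghat_metric
    ghat_inner nabla_conn nabla'_conn) => //.
  rewrite ghat_eq; exact: (nabla_horizontal_induced iota_linear iota_inj ker_rho
    nabla'_conn omega'_form g_metric h_metric).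
by rewrite ghat_eq (pullback_induced_metric iota_linear iota_inj nabla'_conn omega'_form)
  // (inner_part_induced_metric iota_linear iota_inj ker_rho nabla'_conn omega'_form).
Qed.
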